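(* Consider a slotted system with diversity. There are $N$ users, $N_{sub}\ge2$ sub-carriers and slots $1,\dots,T$. In each slot the BS chooses a user via $\pi_u$ and a sub-carrier via $\pi_s$; these algorithms may be randomized and history dependent. It then sends an update to that user on that sub-carrier. The adversary uses a blocking matrix $\sigma\in\{0,1\}^{N_{sub}\times T}$, where $\sigma_j(t)=0$ means sub-carrier $j$ is blocked in slot $t$. Feasibility means $\sum_{j,t}(1-\sigma_j(t))\le\alpha T$ and at most one sub-carrier is blocked per slot, where $0<\alpha<1$. Ages satisfy $a_i(1)=1$, $a_i(t+1)=1$ if user $i$ is chosen in slot $t$ on an unblocked sub-carrier, and $a_i(t+1)=a_i(t)+1$ otherwise. Let $\Delta^{\pi_u,\pi_s,\sigma}=\frac1T\sum_{t=1}^T\frac1N\sum_i\mathbb E[a_i(t)]$ and $\Delta^*(T)=\sup_\sigma\inf_{\pi_u,\pi_s}\Delta^{\pi_u,\pi_s,\sigma}$. Let ''unif'' denote choosing, independently in every slot, a uniformly random user and a uniformly random sub-carrier. Then $$\limsup_{T\to\infty}\frac{\sup_\sigma\Delta^{\mathrm{unif},\mathrm{unif},\sigma}}{\Delta^*(T)}\le\frac{2N_{sub}}{N_{sub}-1}.$$ *)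

From HB Require Import structures.
From mathcomp Require Import all_boot all_order all_algebra.
From mathcomp Require Import boolp classical_sets reals.
Set Implicit Arguments. Unset Strict Implicit. Unset Printing Implicit Defensive.
Import Order.TTheory GRing.Theory Num.Theory.
Local Open Scope ring_scope.
Local Open Scope classical_set_scope.

(* A schedule over slots 0..T-1 (paper's slots 1..T): in each slot, the
   chosen (user, sub-carrier) pair. *)
Definition schedule (N Nsub T : nat) := {ffun 'I_T -> 'I_N * 'I_Nsub}.

(* Blocking matrix: sigma j t = true  <-> sigma_j(t) = 1 (NOT blocked). *)
Definition blocking (Nsub T : nat) := 'I_Nsub -> 'I_T -> bool.

Definition feasible {R : realType} (Nsub T : nat) (alpha : R)
  (sigma : blocking Nsub T) : Prop :=
  ((\sum_(j < Nsub) \sum_(t < T) (~~ sigma j t : nat))%:R <= alpha * T%:R)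
  /\ (forall t : 'I_T, #|[set j : 'I_Nsub | ~~ sigma j t]| <= 1)%N.

(* age s sigma i k = a_i(k+1): a_i(1) = 1, a_i(t+1) = 1 if user i is chosen
   in slot t on an unblocked sub-carrier, a_i(t)+1 otherwise. *)
Fixpoint age (N Nsub T : nat) (s : schedule N Nsub T) (sigma : blocking Nsub T)
  (i : 'I_N) (k : nat) : nat :=
  match k with
  | 0 => 1
  | k'.+1 =>
      match (insub k' : option 'I_T) with
      | Some t => if ((s t).1 == i) && sigma (s t).2 t then 1
                  else (age s sigma i k').+1
      | None => (age s sigma i k').+1
      end
  end.

Definition avg_age {R : realType} (N Nsub T : nat) (s : schedule N Nsub T)
  (sigma : blocking Nsub T) : R :=
  T%:R^-1 * \sum_(t < T) (N%:R^-1 * \sum_(i < N) (age s sigma i t)%:R).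

(* A (possibly randomized, history dependent) pair of policies (pi_u, pi_s)
   facing a fixed blocking matrix induces a probability distribution on the
   finite set of schedules; conversely every such distribution is realized
   by some randomized policy. *)
Definition is_dist {R : realType} (N Nsub T : nat)
  (p : {ffun schedule N Nsub T -> R}) : Prop :=
  (forall s, 0 <= p s) /\ \sum_s p s = 1.

Definition cost {R : realType} (N Nsub T : nat)
  (p : {ffun schedule N Nsub T -> R}) (sigma : blocking Nsub T) : R :=
  \sum_s p s * avg_age s sigma.

Definition unif_dist {R : realType} (N Nsub T : nat) : {ffun schedule N Nsub T -> R} :=
  [ffun s => \prod_(t < T) (N%:R^-1 * Nsub%:R^-1)].

Definition Delta_star {R : realType} (N Nsub T : nat) (alpha : R) : R :=
  sup [set d | exists sigma : blocking Nsub T, feasible alpha sigma /\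
        d = inf [set x | exists p : {ffun schedule N Nsub T -> R},
                          is_dist p /\ x = cost p sigma]].

Definition Delta_unif {R : realType} (N Nsub T : nat) (alpha : R) : R :=
  sup [set d | exists sigma : blocking Nsub T, feasible alpha sigma /\
        d = cost (@unif_dist R N Nsub T) sigma].

From HB Require Import structures.
From mathcomp Require Import all_boot all_order all_algebra.
From mathcomp Require Import boolp classical_sets reals.
From mathcomp Require Import zify ring.
Import Order.TTheory GRing.Theory Num.Theory.
Set Implicit Arguments. Unset Strict Implicit. Unset Printing Implicit Defensive.

(* At slot k, a user of age at most d was last served in one of
   the d slots before k, and each slot serves a single user; so at most d users
   have age <= d, and once k >= N - 1 the N ages sum to at least 1 + ... + N.
   Averaging over T >= N^2 slots, every schedule -- hence every randomized
   policy, against any sigma -- has average age at least N/2.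

   Resampling slot k of a schedule resets a_i with probability at least
   (Nsub - 1)/(N Nsub), since at most one sub-carrier is blocked, so
   E a_i(k+1) <= 1 + (1 - (Nsub - 1)/(N Nsub)) E a_i(k) and hence
   E a_i(k) <= N Nsub/(Nsub - 1) for all k.

   The ratio is therefore at most 2 Nsub/(Nsub - 1) as soon as T >= N^2. *)

Lemma sum_nat_predE (I : finType) (P : pred I) : \sum_i (P i : nat) = #|P|.
Proof.
rewrite -sum1_card [RHS]big_mkcond.
by apply: eq_bigr => i _; rewrite unfold_in; case: (P i).
Qed.

Lemma card_ord_itv n a b : #|[pred t : 'I_n | a <= t < b]| = minn n b - a.
Proof.
rewrite -sum_nat_predE; elim: n => [|n IH]; first by rewrite big_ord0 min0n.
by rewrite big_ord_recr /= IH; case: (leqP a n); case: (ltnP n b) => /=; lia.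
Qed.

Lemma sum_subn_ord n : 2 * \sum_(d < n) (n - d) = n * n.+1.
Proof.
elim: n => [|n IH]; first by rewrite big_ord0.
rewrite big_ord_recl subn0 mulnDr.
under eq_bigr => d _ do rewrite lift0 subSS.
by rewrite IH; lia.
Qed.

Lemma triangular_le_sum (I : finType) (a : I -> nat) :
  (forall d, d < #|I| -> #|[pred i | a i <= d]| <= d) ->
  #|I| * #|I|.+1 <= 2 * \sum_i a i.
Proof.
set n := #|I| => few_small.
have layer_cake : \sum_(d < n) #|[pred i | d < a i]| <= \sum_i a i.
  rewrite -(eq_bigr _ (fun d _ => sum_nat_predE _)) exchange_big /=.
  apply: leq_sum => i _; rewrite sum_nat_predE.
  have := card_ord_itv n 0 (a i); rewrite /= => ->; lia.
rewrite -sum_subn_ord leq_mul2l; apply/orP; right; apply: leq_trans layer_cake.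
apply: leq_sum => -[d /= /few_small small_d] _.
have -> : #|[pred i | d < a i]| = #|[predC [pred i | a i <= d]]|.
  by apply: eq_card => i; rewrite !inE ltnNge.
by rewrite /n -(cardC [pred i | a i <= d]) leq_subLR leq_add2r.
Qed.

Lemma contraction_le_fixpoint (u : nat -> nat) (q c m n : nat) :
  0 < q -> c <= q -> c * u 0 <= q * m ->
  (forall k, k < n -> q * u k.+1 <= q * m + (q - c) * u k) ->
  forall k, k <= n -> c * u k <= q * m.
Proof.
move=> q_gt0 le_cq base step; elim=> [//|k IH] lt_kn.
rewrite -(leq_pmul2l q_gt0) mulnCA.
apply: leq_trans (leq_mul (leqnn c) (step k lt_kn)) _.
have := IH (ltnW lt_kn); have [d ->] : exists d, q = c + d by exists (q - c); lia.
rewrite addKn; nia.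
Qed.

Section FfunUpdate.
Variables (aT rT : finType).

Definition ffun_upd (f : {ffun aT -> rT}) (k : aT) (x : rT) : {ffun aT -> rT} :=
  [ffun t => if t == k then x else f t].

Lemma sum_ffun_upd (F : {ffun aT -> rT} -> nat) (k : aT) :
  #|rT| * \sum_f F f = \sum_f \sum_x F (ffun_upd f k x).
Proof.
pose swap (p : {ffun aT -> rT} * rT) := (ffun_upd p.1 k p.2, p.1 k).
have swapK : involutive swap.
  move=> [f x]; rewrite /swap /= /ffun_upd ffunE eqxx; congr pair.
  by apply/ffunP => t; rewrite !ffunE; case: eqP => // ->.
rewrite pair_bigA /= (reindex_inj (inv_inj swapK)) /=.
rewrite (eq_bigr (fun p => F p.1)); last first.
  move=> [f x] _ /=; congr F.
  by apply/ffunP => t; rewrite !ffunE; case: eqP => // ->.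
rewrite -(pair_bigA _ (fun f _ => F f)) big_distrr /=.
by apply: eq_bigr => f _; rewrite sum_nat_const mulnC.
Qed.

End FfunUpdate.

Section Ages.
Variables (N Nsub T : nat) (s : schedule N Nsub T) (sigma : blocking Nsub T).

Lemma age_gt0 i k : 0 < age s sigma i k.
Proof. by case: k => [|k] //=; case: insubP => [t _ _|_] //; case: ifP. Qed.

Lemma age_last_slot i k : age s sigma i k <= k ->
  exists2 t : 'I_T, t + age s sigma i k = k & (s t).1 = i.
Proof.
elim: k => [|k IH] //=.
case: insubP => [t _ kt|_]; first case: ifP => [/andP[/eqP <- _] _|_].
- by exists t; rewrite ?kt ?addn1.
- by move=> /IH[t' t'k ?]; exists t'; rewrite // addnS t'k.
- by move=> /IH[t' t'k ?]; exists t'; rewrite // addnS t'k.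
Qed.

Lemma card_age_le d k : d <= k -> #|[pred i | age s sigma i k <= d]| <= d.
Proof.
move=> le_dk; pose recent := [pred t : 'I_T | k - d <= t < k].
have served_recently :
    [pred i | age s sigma i k <= d] \subset [seq (s t).1 | t in recent].
  apply/fintype.subsetP => i; rewrite inE => young.
  have [t tk <-] := age_last_slot (leq_trans young le_dk).
  apply: fintype.image_f; rewrite inE /=; have := age_gt0 i k; lia.
apply: leq_trans (subset_leq_card served_recently) _.
apply: leq_trans (leq_image_card _ _) _.
by rewrite card_ord_itv leq_subLR subnK // geq_minr.
Qed.

Lemma sum_age_ge k : N <= k.+1 -> N * N.+1 <= 2 * \sum_(i < N) age s sigma i k.
Proof.
move=> le_Nk; have := @triangular_le_sum _ (age s sigma ^~ k); rewrite card_ord.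
by apply=> d lt_dN; apply: card_age_le; lia.
Qed.

Definition total_age := \sum_(k < T) \sum_(i < N) age s sigma i k.

Lemma total_age_ge : N * N <= T -> N * N * T <= 2 * total_age.
Proof.
move=> le_NNT.
have tail : (T - N.-1) * (N * N.+1) <= 2 * total_age.
  rewrite -[T in T - _]minnn -card_ord_itv -sum_nat_predE big_distrl big_distrr /=.
  apply: leq_sum => k _; rewrite ltn_ord andbT.
  case: (leqP N.-1 k) => /= [le_Nk|_]; rewrite ?mul0n // mul1n sum_age_ge //; lia.
apply: leq_trans tail.
have [e ->] : exists e, T = N * N + e by exists (T - N * N); lia.
case: N {le_NNT} => [|n] //=.
have -> : n.+1 * n.+1 + e - n = n * n + n + 1 + e by lia.
nia.
Qed.

End Ages.

Lemma card_schedule N Nsub T : #|{: schedule N Nsub T}| = (N * Nsub) ^ T.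
Proof. by rewrite card_ffun card_prod !card_ord. Qed.

Section UniformAges.
Variables (N Nsub T : nat) (sigma : blocking Nsub T).
Hypothesis one_blocked : forall t, #|[pred j | ~~ sigma j t]| <= 1.

Lemma age_prefix (s s' : schedule N Nsub T) i k :
  (forall t : 'I_T, t < k -> s t = s' t) -> age s sigma i k = age s' sigma i k.
Proof.
elim: k => [|k IH] //= eq_ss'.
rewrite IH => [|t lt_tk]; last by apply: eq_ss'; lia.
by case: insubP => [t _ kt|_] //; rewrite eq_ss' ?kt.
Qed.

Lemma age_ffun_upd (s : schedule N Nsub T) (k : 'I_T) x i :
  age (ffun_upd s k x) sigma i k.+1 =
  if (x.1 == i) && sigma x.2 k then 1 else (age s sigma i k).+1.
Proof.
rewrite /=; case: insubP => [k' _ kk'|]; last by rewrite ltn_ord.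
have -> : k' = k by apply: val_inj.
rewrite ffunE eqxx (@age_prefix _ s) // => t lt_tk.
by rewrite ffunE; case: eqP => // t_k; rewrite t_k ltnn in lt_tk.
Qed.

Lemma card_served i k :
  #|[pred x : 'I_N * 'I_Nsub | (x.1 == i) && sigma x.2 k]| = #|[pred j | sigma j k]|.
Proof.
rewrite (@eq_card _ _ (finset.setX [set i] [set j | sigma j k])) => [|[u j]]; last first.
  by rewrite !inE.
by rewrite cardsX cards1 mul1n; apply: eq_card => j; rewrite !inE.
Qed.

Lemma card_unblocked_ge t : Nsub - 1 <= #|[pred j | sigma j t]|.
Proof.
rewrite -[Nsub in Nsub - 1]card_ord -(cardC [pred j | sigma j t]) leq_subLR addnC leq_add2r.
by rewrite (eq_card (B := [pred j | ~~ sigma j t])) ?one_blocked.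
Qed.

Lemma sum_age_upd (s : schedule N Nsub T) (k : 'I_T) i :
  \sum_x age (ffun_upd s k x) sigma i k.+1
    <= N * Nsub + (N * Nsub - (Nsub - 1)) * age s sigma i k.
Proof.
set served := [pred x : 'I_N * 'I_Nsub | (x.1 == i) && sigma x.2 k].
set a := age s sigma i k.
rewrite (eq_bigr (fun x => 1 + (~~ served x : nat) * a)) => [|x _]; last first.
  by rewrite age_ffun_upd /=; case: ifP => _; rewrite ?mul0n ?mul1n.
rewrite big_split /= -big_distrl /= sum_nat_predE sum1_card card_prod !card_ord.
rewrite leq_add2l leq_mul2r; apply/orP; right.
have := cardC served; rewrite card_prod !card_ord card_served => <-.
by rewrite -addnBAC ?card_unblocked_ge // (eq_card (B := [predC served])) ?leq_addl.
Qed.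

Lemma sum_age_step i (k : 'I_T) :
  N * Nsub * \sum_(s : schedule N Nsub T) age s sigma i k.+1
    <= N * Nsub * #|{: schedule N Nsub T}|
       + (N * Nsub - (Nsub - 1)) * \sum_(s : schedule N Nsub T) age s sigma i k.
Proof.
have := sum_ffun_upd (fun s => age s sigma i k.+1) k; rewrite card_prod !card_ord => ->.
set c := N * Nsub - (Nsub - 1).
apply: (@leq_trans (\sum_(s : schedule N Nsub T) (N * Nsub + c * age s sigma i k))).
  by apply: leq_sum => s _; apply: sum_age_upd.
by rewrite big_split /= sum_nat_const big_distrr mulnC.
Qed.

Hypotheses (N_gt0 : 0 < N) (Nsub_gt0 : 0 < Nsub).

Lemma sum_age_le i k : k <= T ->
  (Nsub - 1) * \sum_(s : schedule N Nsub T) age s sigma i k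
    <= N * Nsub * #|{: schedule N Nsub T}|.
Proof.
apply: (contraction_le_fixpoint (u := fun k => \sum_s age s sigma i k)).
- by rewrite muln_gt0 N_gt0.
- by rewrite leq_subLR; nia.
- by rewrite /= sum_nat_const muln1; apply: leq_mul => //; rewrite leq_subLR; nia.
- by move=> k' lt_k'T; apply: (sum_age_step i (Ordinal lt_k'T)).
Qed.

Lemma sum_total_age_le :
  (Nsub - 1) * \sum_(s : schedule N Nsub T) total_age s sigma
    <= T * N * (N * Nsub * #|{: schedule N Nsub T}|).
Proof.
rewrite /total_age exchange_big /=; under eq_bigr do rewrite exchange_big /=.
apply: (@leq_trans (\sum_(k < T) \sum_(i < N) N * Nsub * #|{: schedule N Nsub T}|)).
  rewrite big_distrr; apply: leq_sum => k _; rewrite big_distrr; apply: leq_sum => i _.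
  exact: sum_age_le (ltnW (ltn_ord k)).
by rewrite !sum_nat_const !card_ord mulnA.
Qed.

End UniformAges.

Local Open Scope ring_scope.

Lemma avg_ageE (R : realType) N Nsub T (s : schedule N Nsub T) sigma :
  avg_age s sigma = (total_age s sigma)%:R / (T * N)%:R :> R.
Proof.
rewrite /avg_age /total_age -mulr_sumr mulrA natrM invfM mulrC natr_sum.
by congr (_ * _); apply: eq_bigr => k _; rewrite natr_sum.
Qed.

Lemma avg_age_ge (R : realType) N Nsub T (s : schedule N Nsub T) sigma :
  (0 < N)%N -> (N * N <= T)%N -> N%:R / 2 <= avg_age s sigma :> R.
Proof.
move=> N_gt0 le_NNT.
have T_gt0 : (0 < T)%N by apply: leq_trans le_NNT; rewrite muln_gt0 N_gt0.
rewrite avg_ageE ler_pdivlMr ?ltr0n ?muln_gt0 ?N_gt0 ?T_gt0 //.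
rewrite mulrAC ler_pdivrMr ?ltr0n // -!natrM ler_nat.
by have := total_age_ge s sigma le_NNT; lia.
Qed.

Lemma cost_ge (R : realType) N Nsub T (p : {ffun schedule N Nsub T -> R}) sigma :
  (0 < N)%N -> (N * N <= T)%N -> is_dist p -> N%:R / 2 <= cost p sigma.
Proof.
move=> N_gt0 le_NNT [p_ge0 p_sum1].
rewrite -[_ / 2]mul1r -[X in X * _]p_sum1 mulr_suml; apply: ler_sum => s _.
by apply: ler_wpM2l => //; apply: avg_age_ge.
Qed.

Lemma feasible_one_blocked (R : realType) Nsub T (alpha : R) (sigma : blocking Nsub T) :
  feasible alpha sigma -> forall t, (#|[pred j | ~~ sigma j t]| <= 1)%N.
Proof.
move=> [_ one_blocked] t; apply: leq_trans (one_blocked t); apply/eq_leq/eq_card => j.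
by rewrite inE; apply/idP/idP => [/mem_set|/set_mem].
Qed.

Lemma unif_distE (R : realType) N Nsub T (s : schedule N Nsub T) :
  @unif_dist R N Nsub T s = #|{: schedule N Nsub T}|%:R^-1.
Proof.
by rewrite ffunE prodr_const card_ord card_schedule natrX natrM -exprVn invfM.
Qed.

Lemma unif_is_dist (R : realType) N Nsub T :
  (0 < N)%N -> (0 < Nsub)%N -> is_dist (@unif_dist R N Nsub T).
Proof.
move=> N_gt0 Nsub_gt0; split => [s|]; first by rewrite unif_distE invr_ge0.
under eq_bigr do rewrite unif_distE.
rewrite sumr_const -[_ *+ _]mulr_natr mulVf // pnatr_eq0 -lt0n card_schedule.
by rewrite expn_gt0 muln_gt0 N_gt0 Nsub_gt0.
Qed.

Lemma cost_unif_le (R : realType) N Nsub T (alpha : R) (sigma : blocking Nsub T) :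
  (0 < N)%N -> (2 <= Nsub)%N -> feasible alpha sigma ->
  cost (@unif_dist R N Nsub T) sigma <= N%:R * Nsub%:R / (Nsub%:R - 1).
Proof.
move=> N_gt0 Nsub_ge2 /feasible_one_blocked one_blocked.
have := sum_total_age_le one_blocked N_gt0 (ltnW Nsub_ge2).
set M := #|{: schedule N Nsub T}|; set S := (\sum_s total_age s sigma)%N => le_S.
have Nsub1_gt0 : 0 < Nsub%:R - 1 :> R by rewrite subr_gt0 ltr1n.
rewrite /cost; under eq_bigr do rewrite unif_distE avg_ageE.
rewrite -mulr_sumr -mulr_suml -natr_sum -/S -/M.
case: (posnP T) => [->|T_gt0].
  by rewrite mul0n invr0 !mulr0; apply: divr_ge0; [apply: mulr_ge0 | apply: ltW].
have MTN_gt0 : (0 < M * (T * N))%N.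
  by rewrite !muln_gt0 T_gt0 N_gt0 /M card_schedule expn_gt0 muln_gt0 N_gt0; lia.
rewrite mulrCA -invfM -[_%:R * (T * N)%:R]natrM ler_pdivrMr ?ltr0n //.
rewrite [_ / _ * _]mulrAC ler_pdivlMr //.
by rewrite -(natrB _ (ltnW Nsub_ge2)) -!natrM ler_nat; nia.
Qed.

Section DeltaBounds.
Variables (R : realType) (N Nsub T : nat) (alpha : R).
Hypotheses (N_gt0 : (0 < N)%N) (Nsub_ge2 : (2 <= Nsub)%N) (alpha_ge0 : 0 <= alpha).

Let unblocked : blocking Nsub T := fun _ _ => true.
Local Notation unif := (@unif_dist R N Nsub T).

Lemma feasible_unblocked : feasible alpha unblocked.
Proof.
split=> [|t]; first by rewrite big1 ?mulr_ge0 // => j _; rewrite big1.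
by rewrite (eq_card (B := pred0)) ?card0 // => j; apply/negbTE/negP => /set_mem.
Qed.

Lemma Delta_unif_le : @Delta_unif R N Nsub T alpha <= N%:R * Nsub%:R / (Nsub%:R - 1).
Proof.
apply: ge_sup => [|_ [sigma [feas ->]]]; last exact: cost_unif_le feas.
by exists (cost unif unblocked), unblocked; split=> //; exact: feasible_unblocked.
Qed.

Lemma Delta_star_ge : (N * N <= T)%N -> N%:R / 2 <= @Delta_star R N Nsub T alpha.
Proof.
move=> le_NNT.
pose costs sigma :=
  [set x : R | exists p, is_dist p /\ x = @cost R N Nsub T p sigma]%classic.
have unif_cost sigma : costs sigma (cost unif sigma).
  by exists unif; split=> //; apply: unif_is_dist; lia.
have costs_ge sigma : lbound (costs sigma) (N%:R / 2).
  by move=> _ [p [p_dist ->]]; apply: cost_ge.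
apply: (@le_trans _ _ (inf (costs unblocked))).
  by apply: lb_le_inf (costs_ge unblocked); exists (cost unif unblocked).
apply: ub_le_sup; last by exists unblocked; split=> //; exact: feasible_unblocked.
exists (N%:R * Nsub%:R / (Nsub%:R - 1)) => _ [sigma [feas ->]].
apply: le_trans (cost_unif_le N_gt0 Nsub_ge2 feas).
by apply: ge_inf; [exists (N%:R / 2); apply: costs_ge | apply: unif_cost].
Qed.

End DeltaBounds.

Theorem theorem11 (R : realType) (N Nsub : nat) (alpha : R)
  (hN : (0 < N)%N) (hNsub : (2 <= Nsub)%N) (ha0 : 0 < alpha) (ha1 : alpha < 1) :
  forall eps : R, 0 < eps ->
  exists T0 : nat, forall T : nat, (T0 <= T)%N ->
    @Delta_unif R N Nsub T alpha / @Delta_star R N Nsub T alpha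
      <= (2 * Nsub%:R) / (Nsub%:R - 1) + eps.
Proof.
move=> eps eps_gt0; exists (N * N)%N => T le_NNT.
have Nsub1_gt0 : 0 < Nsub%:R - 1 :> R by rewrite subr_gt0 ltr1n.
have star_ge := Delta_star_ge hN hNsub (ltW ha0) le_NNT.
have star_gt0 : 0 < @Delta_star R N Nsub T alpha.
  by apply: lt_le_trans star_ge; rewrite divr_gt0 ?ltr0n.
rewrite ler_pdivrMr //; apply: le_trans (Delta_unif_le T hN hNsub (ltW ha0)) _.
have -> : N%:R * Nsub%:R / (Nsub%:R - 1) = 2 * Nsub%:R / (Nsub%:R - 1) * (N%:R / 2) :> R.
  by field; rewrite lt0r_neq0.
by apply: ler_pM; rewrite ?divr_ge0 ?mulr_ge0 ?lerDl // ltW.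
Qed.
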